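(* Let $(w_{ij})_{i,j=1}^N$ be a nonnegative weight matrix with $w_{ii}=0$ defining a strongly connected directed graph on $N=N_{\mathrm{G}}+N_{\mathrm{R}}$ vertices, each vertex colored green or red with $N_{\mathrm{G}}$ green and $N_{\mathrm{R}}$ red vertices. Assume: (i) $w_{ij}=0$ whenever $i,j$ have the same color; (ii) every green vertex has in-degree $\sum_j w_{ji}=w^{\mathrm{in}}_{\mathrm{G}}$ and out-degree $\sum_j w_{ij}=w^{\mathrm{out}}_{\mathrm{G}}$, and every red vertex has in-degree $w^{\mathrm{in}}_{\mathrm{R}}$ and out-degree $w^{\mathrm{out}}_{\mathrm{R}}$, all positive; (iii) for every green $i$ and red $j$, $w_{ji}=\frac{w^{\mathrm{in}}_{\mathrm{G}}}{w^{\mathrm{out}}_{\mathrm{G}}}\,w_{ij}$. Let $a_{\mathrm{G}},a_{\mathrm{R}},b_{\mathrm{G}},b_{\mathrm{R}}>0$ and set $$\zeta_{\mathrm{G}}=\frac{b_{\mathrm{R}}w^{\mathrm{in}}_{\mathrm{G}}(a_{\mathrm{R}}w^{\mathrm{out}}_{\mathrm{R}}+b_{\mathrm{G}}w^{\mathrm{in}}_{\mathrm{R}})}{a_{\mathrm{R}}w^{\mathrm{out}}_{\mathrm{R}}(a_{\mathrm{G}}w^{\mathrm{out}}_{\mathrm{G}}+b_{\mathrm{R}}w^{\mathrm{in}}_{\mathrm{G}})},\qquad \zeta_{\mathrm{R}}=\frac{b_{\mathrm{G}}w^{\mathrm{in}}_{\mathrm{R}}(a_{\mathrm{G}}w^{\mathrm{out}}_{\mathrm{G}}+b_{\mathrm{R}}w^{\mathrm{in}}_{\mathrm{G}})}{a_{\mathrm{G}}w^{\mathrm{out}}_{\mathrm{G}}(a_{\mathrm{R}}w^{\mathrm{out}}_{\mathrm{R}}+b_{\mathrm{G}}w^{\mathrm{in}}_{\mathrm{R}})},$$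 and for a state $\mathbf{x}\in\{0,1\}^N$ let $\zeta_i=\zeta_{\mathrm{G}}$ if $i$ is green and $\zeta_i=\zeta_{\mathrm{R}}$ if $i$ is red. Then $\prod_i\zeta_i^{X_n(i)}$ is a martingale for the process $X_n$, and, provided $\zeta_{\mathrm{G}}^{N_{\mathrm{G}}}\zeta_{\mathrm{R}}^{N_{\mathrm{R}}}\neq1$, the fixation probability of $A$ from initial state $\mathbf{x}$ is $$\rho_A(\mathbf{x})=\frac{1-\prod_{i=1}^N\zeta_i^{x_i}}{1-\zeta_{\mathrm{G}}^{N_{\mathrm{G}}}\zeta_{\mathrm{R}}^{N_{\mathrm{R}}}}.$$ In particular the mean fixation probability of a single $A$ at a uniformly random vertex is $$\rho_A=\frac{1-\frac1N\left(N_{\mathrm{G}}\zeta_{\mathrm{G}}+N_{\mathrm{R}}\zeta_{\mathrm{R}}\right)}{1-\zeta_{\mathrm{G}}^{N_{\mathrm{G}}}\zeta_{\mathrm{R}}^{N_{\mathrm{R}}}}.$$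
   Context: States are $\mathbf{x}\in\{0,1\}^N$, with $x_i=1$ meaning vertex $i$ holds type $A$ and $x_i=0$ type $B$. The fitness of the occupant of vertex $j$ is $a_j$ if it is type $A$ and $b_j$ if type $B$, where $a_j=a_{\mathrm{G}},b_j=b_{\mathrm{G}}$ if $j$ is green and $a_j=a_{\mathrm{R}},b_j=b_{\mathrm{R}}$ if $j$ is red. Weighted Moran process: in each step, an ordered pair $(j,i)$ is chosen with probability proportional to $f_j w_{ji}$, where $f_j$ is the fitness of the occupant of $j$ (normalized by $\sum_{j,k}f_j w_{jk}$), and the occupant of $i$ is replaced by an offspring of the type of the occupant of $j$. $X_n$ denotes the state at time $n$. Fixation of $A$ means absorption in the all-ones state. *)

From HB Require Import structures.
From mathcomp Require Import all_boot all_order all_algebra.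
From mathcomp Require Import all_classical all_reals all_analysis.
Set Implicit Arguments.
Unset Strict Implicit.
Unset Printing Implicit Defensive.
Import Order.TTheory GRing.Theory Num.Theory.
Local Open Scope ring_scope.

(* States x in {0,1}^N : x i = true means vertex i holds type A. *)
Definition state (N : nat) := {ffun 'I_N -> bool}.

Definition all_ones (N : nat) : state N := [ffun => true].

Definition single_A (N : nat) (i : 'I_N) : state N := [ffun k => k == i].

Section Moran.
Variables (R : realType) (N : nat) (w : 'I_N -> 'I_N -> R) (green : {set 'I_N})
          (aG aR bG bR : R).

Definition fitness (x : state N) (j : 'I_N) : R :=
  if x j then (if j \in green then aG else aR)
  else (if j \in green then bG else bR).

Definition total_fitness (x : state N) : R :=
  \sum_(j < N) \sum_(k < N) fitness x j * w j k.

Definition replace (x : state N) (j i : 'I_N) : state N :=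
  [ffun k => if k == i then x j else x k].

Definition trans (x y : state N) : R :=
  \sum_(j < N) \sum_(i < N)
     (if replace x j i == y then fitness x j * w j i / total_fitness x else 0).

Fixpoint nstep (n : nat) (x y : state N) : R :=
  match n with
  | 0 => (x == y)%:R
  | n'.+1 => \sum_(z : state N) nstep n' x z * trans z y
  end.

End Moran.

From HB Require Import structures.
From mathcomp Require Import all_boot all_order all_algebra.
From mathcomp Require Import all_classical all_reals all_analysis.
From mathcomp Require Import lra ring.
Import Order.TTheory GRing.Theory Num.Theory.
Import numFieldNormedType.Exports.
Local Open Scope classical_set_scope.
Local Open Scope ring_scope.

(* The proof has three independent ingredients.
   1. Absorbing chains (section AbsorbingChain): for n-step kernels on a
      finite space with two absorbing states a, b, if a is reachable from every
      transient state in M steps, the mass left on transient states decays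
      geometrically; hence for every harmonic phi with phi b = 1 and
      phi a = Z != 1, the n-step probability of being in a converges to
      (1 - phi x) / (1 - Z) (optional stopping in finite form).
   2. The Moran process (section MoranProcess): its kernels are stochastic,
      satisfy Chapman-Kolmogorov, the monochromatic states are absorbing, and
      on a strongly connected graph the all-A state is reachable in N steps
      from every state containing an A.
   3. The martingale (section Martingale): on each edge {g, r} the expected
      changes of prod_i zeta_i^{x_i} caused by g reproducing onto r and r onto
      g cancel, provided zeta_G, zeta_R solve two balance equations; the values
      of the theorem solve them because the red degrees satisfy woutR = c winR. *)

Lemma sum_ge_term {R : numDomainType} {I : finType} (F : I -> R) (i0 : I) :
  (forall i, 0 <= F i) -> F i0 <= \sum_i F i.
Proof. by move=> F_ge0; rewrite (bigD1 i0) //= lerDl sumr_ge0. Qed.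

Lemma finite_positive_lower_bound (R : realDomainType) (S : finType) (F : S -> R) :
  (forall y, 0 < F y) -> exists2 d, 0 < d & forall y, d <= F y.
Proof.
move=> F_gt0.
suff [d d_gt0 d_le] : exists2 d, 0 < d & forall y, y \in enum S -> d <= F y.
  by exists d => // y; apply: d_le; rewrite mem_enum.
elim: (enum S) => [|s0 s [d d_gt0 d_le]]; first by exists 1.
exists (Num.min d (F s0)); first by rewrite lt_min d_gt0 F_gt0.
move=> y; rewrite inE => /orP[/eqP ->|ys]; first by rewrite ge_min lexx orbT.
by rewrite ge_min d_le.
Qed.

Lemma antitone_geometric_cvg0 (R : realType) (u : nat -> R) (q : R) (M : nat) :
  (forall n, 0 <= u n) -> (forall n m, u (n + m)%N <= u n) ->
  0 <= q < 1 -> (forall k, u (k * M)%N <= q ^+ k) -> u @ \oo --> 0.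
Proof.
move=> u_ge0 u_antitone /andP[q_ge0 q_lt1] u_geom.
apply/cvgr0Pnorm_lt => e e_gt0.
have q_norm : `|q| < 1 by rewrite ger0_norm.
have [k _ qk_small] := (cvgr0Pnorm_lt _).1 (cvg_expr q_norm) e e_gt0.
exists (k * M)%N => // n /= le_kM_n.
rewrite ger0_norm // -(subnKC le_kM_n).
apply: le_lt_trans (u_antitone _ _) (le_lt_trans (u_geom k) _).
by have := qk_small k (leqnn k); rewrite ger0_norm ?exprn_ge0.
Qed.

Lemma sum_antisymmetric (R : realFieldType) (N : nat) (D : 'I_N -> 'I_N -> R) :
  (forall j i, D j i + D i j = 0) -> \sum_j \sum_i D j i = 0.
Proof.
move=> D_anti.
have swap : \sum_j \sum_i D j i = \sum_j \sum_i D i j by rewrite exchange_big.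
have twice : \sum_j \sum_i D j i + \sum_j \sum_i D j i = 0.
  rewrite {2}swap -big_split big1 // => j _.
  by rewrite -big_split big1 // => i _; apply: D_anti.
move: (\sum_j \sum_i D j i) twice => S twice; lra.
Qed.

Section AbsorbingChain.
Context {R : realType} {S : finType} {Pn : nat -> S -> S -> R} {a b : S}.
Hypothesis Pn_ge0 : forall n x y, 0 <= Pn n x y.
Hypothesis Pn_sum1 : forall n x, \sum_y Pn n x y = 1.
Hypothesis Pn_CK : forall n m x y, Pn (n + m)%N x y = \sum_z Pn n x z * Pn m z y.
Hypothesis a_absorbing : forall n y, Pn n a y = (a == y)%:R.
Hypothesis b_absorbing : forall n y, Pn n b y = (b == y)%:R.
Hypothesis a_neq_b : a != b.

Local Notation transient y := ((y != a) && (y != b)).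

Definition transient_mass (n : nat) (x : S) : R := \sum_(y | transient y) Pn n x y.

Lemma sum_split_absorbing (F : S -> R) :
  \sum_y F y = F a + F b + \sum_(y | transient y) F y.
Proof. by rewrite (bigD1 a) //= (bigD1 b) 1?eq_sym //= addrA. Qed.

Lemma transient_mass_ge0 n x : 0 <= transient_mass n x.
Proof. exact: sumr_ge0. Qed.

Lemma transient_mass_split n x :
  transient_mass n x = 1 - Pn n x a - Pn n x b.
Proof. by rewrite -(Pn_sum1 n x) (sum_split_absorbing (Pn n x)) /transient_mass; ring. Qed.

Lemma transient_mass_absorbed n y : ~~ transient y -> transient_mass n y = 0.
Proof.
rewrite negb_and !negbK => y_abs; apply: big1 => z /andP[za zb].
by case/orP: y_abs => /eqP ->; rewrite ?a_absorbing ?b_absorbing eq_sym ?(negbTE za) ?(negbTE zb).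
Qed.

Lemma transient_mass_CK n m x :
  transient_mass (n + m)%N x = \sum_(y | transient y) Pn n x y * transient_mass m y.
Proof.
rewrite /transient_mass; under eq_bigr do rewrite Pn_CK.
rewrite exchange_big /= [RHS]big_mkcond /=; apply: eq_bigr => y _.
rewrite -mulr_sumr; case: ifPn => // /(transient_mass_absorbed m).
by rewrite /transient_mass => ->; rewrite mulr0.
Qed.

Lemma transient_mass_le1 n x : transient_mass n x <= 1.
Proof.
by rewrite transient_mass_split; have := Pn_ge0 n x a; have := Pn_ge0 n x b; lra.
Qed.

Lemma transient_mass_antitone n m x : transient_mass (n + m)%N x <= transient_mass n x.
Proof.
rewrite transient_mass_CK; apply: ler_sum => y _.
by rewrite -[leRHS]mulr1 ler_wpM2l ?transient_mass_le1.
Qed.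

Variable M : nat.
Hypothesis reach_a : forall x, transient x -> 0 < Pn M x a.

Lemma transient_mass_contraction :
  exists2 q, 0 <= q < 1 & forall y, transient_mass M y <= q.
Proof.
pose F y := if transient y then Pn M y a else 1.
have [d d_gt0 d_le] : exists2 d, 0 < d & forall y, d <= F y.
  by apply: finite_positive_lower_bound => y; rewrite /F; case: ifPn => // /reach_a.
have d_le1 : d <= 1 by have := d_le a; rewrite /F eqxx.
exists (1 - d); first by rewrite subr_ge0 d_le1 ltrBlDr ltrDl.
move=> y; case: (boolP (transient y)) => [y_tr | /(transient_mass_absorbed M) ->].
  have := d_le y; rewrite /F y_tr transient_mass_split => d_le_a.
  by have := Pn_ge0 M y b; lra.
by rewrite subr_ge0.
Qed.

Lemma transient_mass_cvg0 x : transient_mass n x @[n --> \oo] --> 0.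
Proof.
have [q q_range q_bound] := transient_mass_contraction.
apply: (@antitone_geometric_cvg0 _ _ q M) => //.
- by move=> n; apply: transient_mass_ge0.
- by move=> n m; apply: transient_mass_antitone.
elim=> [|k IH]; first by rewrite mul0n expr0 transient_mass_le1.
case/andP: q_range => q_ge0 _.
rewrite mulSn addnC transient_mass_CK exprS.
apply: (@le_trans _ _ (\sum_(y | transient y) Pn (k * M)%N x y * q)).
  by apply: ler_sum => y _; rewrite ler_wpM2l.
by rewrite -mulr_suml mulrC ler_wpM2l.
Qed.

(* Finite optional stopping: for a harmonic phi with phi b = 1 and
   phi a = Z != 1, the absorption probability in a is (1 - phi x)/(1 - Z). *)
Context {phi : S -> R} {Z : R}.
Hypothesis phi_harmonic : forall n x, \sum_y Pn n x y * phi y = phi x.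
Hypothesis phi_a : phi a = Z.
Hypothesis phi_b : phi b = 1.
Hypothesis Z_neq1 : Z != 1.

Lemma absorption_error_bound n x :
  `|(1 - phi x) / (1 - Z) - Pn n x a| <=
    (1 + \sum_y `|phi y|) / `|1 - Z| * transient_mass n x.
Proof.
set t := transient_mass n x; set C := \sum_y `|phi y|.
set s := \sum_(y | transient y) Pn n x y * phi y.
have Z1 : 1 - Z != 0 by rewrite subr_eq0 eq_sym.
have t_ge0 : 0 <= t := transient_mass_ge0 n x.
have s_le : `|s| <= C * t.
  apply: le_trans (ler_norm_sum _ _ _) _.
  apply: (@le_trans _ _ (\sum_(y | transient y) t * `|phi y|)).
    apply: ler_sum => y y_tr; rewrite normrM ger0_norm // ler_wpM2r //.
    by rewrite /t /transient_mass (bigD1 y) //= lerDl sumr_ge0.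
  rewrite -mulr_sumr mulrC ler_wpM2r ?sumr_ge0 //.
  by rewrite /C [leRHS](bigID (fun y => transient y)) /= lerDl sumr_ge0.
have phi_x : phi x = Pn n x a * Z + Pn n x b + s.
  by rewrite -(phi_harmonic n x) sum_split_absorbing phi_a phi_b mulr1.
have -> : (1 - phi x) / (1 - Z) - Pn n x a = (t - s) / (1 - Z).
  apply: (mulIf Z1); rewrite mulfVK // mulrBl mulfVK //.
  by rewrite /t transient_mass_split phi_x; ring.
rewrite normrM normfV mulrAC ler_pM2r ?invr_gt0 ?normr_gt0 //.
apply: le_trans (ler_normB _ _) _.
by rewrite ger0_norm // mulrDl mul1r lerD2l.
Qed.

Lemma absorption_probability_cvg x :
  Pn n x a @[n --> \oo] --> (1 - phi x) / (1 - Z).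
Proof.
set L := (1 - phi x) / (1 - Z).
set K := (1 + \sum_y `|phi y|) / `|1 - Z|.
have Kt_cvg0 : K * transient_mass n x @[n --> \oo] --> 0.
  by rewrite -(mulr0 K); apply: cvgMl_tmp; apply: transient_mass_cvg0.
have err_cvg0 : L - Pn n x a @[n --> \oo] --> 0.
  apply: (squeeze_cvgr (f := fun n => - (K * transient_mass n x))
                       (h := fun n => K * transient_mass n x)).
  - by apply: nearW => n; rewrite -ler_norml absorption_error_bound.
  - by rewrite -oppr0; apply: cvgN.
  - exact: Kt_cvg0.
have -> : (fun n => Pn n x a) = (fun n => L - (L - Pn n x a)).
  by apply/funext => n; rewrite subKr.
by rewrite -[X in _ --> X]subr0; apply: cvgB => //; apply: cvg_cst.
Qed.

End AbsorbingChain.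

Lemma connect_exit_edge {T : finType} {e : rel T} (P : pred T) {x y : T} :
  connect e x y -> P x -> ~~ P y -> exists u v, [/\ e u v, P u & ~~ P v].
Proof.
move/connectP=> [p]; elim: p x => [|z p IH] x /=; first by move=> _ -> ->.
move=> /andP[e_xz path_z] last_y Px nPy.
case Pz: (P z); first exact: (IH z path_z last_y Pz nPy).
by exists x, z; rewrite e_xz Px Pz.
Qed.

Definition all_zeros (N : nat) : state N := [ffun => false].

Definition num_B {N : nat} (x : state N) : nat := #|[set i | ~~ x i]%SET|.

Lemma num_B_eq0 {N : nat} (x : state N) : num_B x = 0%N -> x = all_ones N.
Proof.
move=> /eqP; rewrite /num_B cards_eq0 => /eqP x_B; apply/ffunP => i; rewrite ffunE.
apply/negPn/negP => nxi.
have : i \in [set l | ~~ x l]%SET by rewrite inE.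
by rewrite x_B inE.
Qed.

Lemma replace_same {N : nat} (x : state N) j i : x j = x i -> replace x j i = x.
Proof. by move=> xji; apply/ffunP => k; rewrite ffunE; case: eqP => // ->. Qed.

Lemma replace_all_ones (N : nat) j i : replace (all_ones N) j i = all_ones N.
Proof. by apply: replace_same; rewrite !ffunE. Qed.

Lemma replace_all_zeros (N : nat) j i : replace (all_zeros N) j i = all_zeros N.
Proof. by apply: replace_same; rewrite !ffunE. Qed.

Section MoranProcess.
Context {R : realType} {N : nat} {w : 'I_N -> 'I_N -> R} {green : {set 'I_N}}
        {aG aR bG bR : R}.
Hypotheses (aG_gt0 : 0 < aG) (aR_gt0 : 0 < aR) (bG_gt0 : 0 < bG) (bR_gt0 : 0 < bR).
Hypothesis w_ge0 : forall i j, 0 <= w i j.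

Local Notation fit := (fitness green aG aR bG bR).
Local Notation total := (total_fitness w green aG aR bG bR).
Local Notation P := (trans w green aG aR bG bR).
Local Notation Pn := (nstep w green aG aR bG bR).

Lemma fitness_gt0 x j : 0 < fit x j.
Proof. by rewrite /fitness; do 2 case: ifP. Qed.

Lemma total_fitness_ge0 x : 0 <= total x.
Proof.
by apply: sumr_ge0 => j _; apply: sumr_ge0 => k _; rewrite mulr_ge0 ?w_ge0 ?ltW ?fitness_gt0.
Qed.

Lemma total_fitness_gt0 {j0 k0} x : 0 < w j0 k0 -> 0 < total x.
Proof.
move=> w_pos; apply: (lt_le_trans _ (sum_ge_term _ j0 _)); last first.
  by move=> j; apply: sumr_ge0 => k _; rewrite mulr_ge0 ?w_ge0 ?ltW ?fitness_gt0.
apply: (lt_le_trans _ (sum_ge_term _ k0 _)); first by rewrite mulr_gt0 ?fitness_gt0.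
by move=> k; rewrite mulr_ge0 ?w_ge0 ?ltW ?fitness_gt0.
Qed.

Lemma trans_ge0 x y : 0 <= P x y.
Proof.
apply: sumr_ge0 => j _; apply: sumr_ge0 => i _; case: ifP => // _.
by rewrite divr_ge0 ?total_fitness_ge0 // mulr_ge0 ?w_ge0 ?ltW ?fitness_gt0.
Qed.

Lemma trans_expectation x (g : state N -> R) :
  \sum_y P x y * g y = (\sum_j \sum_i fit x j * w j i * g (replace x j i)) / total x.
Proof.
rewrite /trans mulr_suml; under eq_bigr do rewrite mulr_suml.
rewrite exchange_big /=; apply: eq_bigr => j _.
under eq_bigr do rewrite mulr_suml.
rewrite exchange_big /= mulr_suml; apply: eq_bigr => i _.
rewrite (bigD1 (replace x j i)) //= eqxx big1 ?addr0; first by rewrite mulrAC.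
by move=> y /negbTE; rewrite eq_sym => ->; rewrite mul0r.
Qed.

Lemma trans_invariant x (g : state N -> R) :
  0 < total x -> (forall j i, g (replace x j i) = g x) -> \sum_y P x y * g y = g x.
Proof.
move=> total_pos g_inv; rewrite trans_expectation.
under eq_bigr do under eq_bigr do rewrite g_inv.
under eq_bigr do rewrite -mulr_suml.
by rewrite -mulr_suml mulrAC divff ?mul1r // gt_eqF.
Qed.

Lemma trans_replace_ge x j i : fit x j * w j i / total x <= P x (replace x j i).
Proof.
have event_ge0 j' i' : 0 <= (if replace x j' i' == replace x j i then
    fit x j' * w j' i' / total x else 0).
  by case: ifP => // _; rewrite divr_ge0 ?total_fitness_ge0 // mulr_ge0 ?w_ge0 ?ltW ?fitness_gt0.
apply: le_trans (sum_ge_term _ j _); last by move=> j'; apply: sumr_ge0.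
by apply: le_trans (sum_ge_term _ i _) => //; rewrite eqxx.
Qed.

Lemma nstep1 x y : Pn 1 x y = P x y.
Proof.
rewrite /= (bigD1 x) //= eqxx mul1r big1 ?addr0 // => z /negbTE.
by rewrite eq_sym => ->; rewrite mul0r.
Qed.

Lemma nstep_ge0 n x y : 0 <= Pn n x y.
Proof.
elim: n y => [|n IH] y /=; first by rewrite ler0n.
by apply: sumr_ge0 => z _; rewrite mulr_ge0 ?trans_ge0.
Qed.

Lemma nstep_add n m x y : Pn (n + m)%N x y = \sum_z Pn n x z * Pn m z y.
Proof.
elim: m y => [|m IH] y.
  rewrite addn0 /= (bigD1 y) //= eqxx mulr1 big1 ?addr0 // => z /negbTE ->.
  by rewrite mulr0.
rewrite addnS; change (\sum_z Pn (n + m)%N x z * P z y = \sum_z Pn n x z * Pn m.+1 z y).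
under eq_bigr do rewrite IH mulr_suml.
rewrite exchange_big /=; apply: eq_bigr => z _.
by rewrite mulr_sumr; apply: eq_bigr => u _; rewrite mulrA.
Qed.

Lemma nstep_harmonic (g : state N -> R) n x :
  (forall z, \sum_y P z y * g y = g z) -> \sum_y Pn n x y * g y = g x.
Proof.
move=> g_harm; elim: n => [|n IH] /=.
  rewrite (bigD1 x) //= eqxx mul1r big1 ?addr0 // => y /negbTE.
  by rewrite eq_sym => ->; rewrite mul0r.
under eq_bigr do rewrite mulr_suml.
rewrite exchange_big /= -{}IH; apply: eq_bigr => z _.
by rewrite -g_harm mulr_sumr; apply: eq_bigr => y _; rewrite mulrA.
Qed.

(* From now on the graph carries at least one edge of positive weight, so every
   transition kernel row is a probability distribution. *)
Hypothesis total_gt0 : forall x, 0 < total x.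

Lemma nstep_sum1 n x : \sum_y Pn n x y = 1.
Proof.
have := nstep_harmonic (fun=> 1) n x (fun z => trans_invariant z (fun=> 1) (total_gt0 z) (fun _ _ => erefl)).
by under eq_bigr do rewrite mulr1.
Qed.

Lemma nstep_absorbing n x y :
  (forall j i, replace x j i = x) -> Pn n x y = (x == y)%:R.
Proof.
move=> x_fixed; elim: n y => [|n IH] y //=; under eq_bigr do rewrite IH.
rewrite (bigD1 x) //= eqxx mul1r big1 ?addr0; last first.
  by move=> z /negbTE; rewrite eq_sym => ->; rewrite mul0r.
have := trans_invariant x (fun z => (z == y)%:R) (total_gt0 x) (fun j i => congr1 _ (x_fixed j i)).
rewrite (bigD1 y) //= eqxx mulr1 big1 ?addr0 // => z /negbTE ->.
by rewrite mulr0.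
Qed.

Hypothesis strongly_connected : forall i j, connect [rel k l | 0 < w k l] i j.

Lemma step_towards_all_ones x :
  x != all_zeros N -> x != all_ones N ->
  exists y, [/\ 0 < P x y, y != all_zeros N & (num_B y < num_B x)%N].
Proof.
move=> x_nz x_no.
have [j0 xj0] : exists j, x j.
  apply/existsP; move: x_nz; apply: contraNT; rewrite negb_exists => /forallP x_B.
  by apply/eqP/ffunP => i; rewrite ffunE; apply/negbTE.
have [i0 nxi0] : exists i, ~~ x i.
  apply/existsP; move: x_no; apply: contraNT; rewrite negb_exists => /forallP x_A.
  by apply/eqP/ffunP => i; rewrite ffunE; apply/negbNE.
have [j [i [/= w_ji xj nxi]]] := connect_exit_edge (fun k => x k) (strongly_connected j0 i0) xj0 nxi0.
exists (replace x j i); split.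
- by apply: lt_le_trans (trans_replace_ge x j i); rewrite divr_gt0 ?mulr_gt0 ?fitness_gt0.
- by apply/eqP => /ffunP /(_ i); rewrite !ffunE eqxx xj.
rewrite /num_B (cardsD1 i [set l | ~~ x l]%SET) inE nxi add1n ltnS.
have -> : [set l | ~~ replace x j i l]%SET = [set l | ~~ x l]%SET :\ i.
  by apply/setP => l; rewrite !inE ffunE; case: eqP => [->|]; rewrite ?xj ?nxi.
by [].
Qed.

Lemma reach_all_ones k x :
  x != all_zeros N -> (num_B x <= k)%N -> 0 < Pn k x (all_ones N).
Proof.
have ones_absorbing n : Pn n (all_ones N) (all_ones N) = 1.
  by rewrite nstep_absorbing ?eqxx // => j i; apply: replace_all_ones.
elim: k x => [|k IH] x x_nz num_x.
  by move: num_x; rewrite leqn0 => /eqP/num_B_eq0 ->; rewrite ones_absorbing.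
have [-> | x_no] := eqVneq x (all_ones N); first by rewrite ones_absorbing.
have [y [P_xy y_nz num_y]] := step_towards_all_ones x x_nz x_no.
rewrite -add1n nstep_add; apply: lt_le_trans (sum_ge_term _ y _); last first.
  by move=> z; rewrite mulr_ge0 ?nstep_ge0.
by rewrite nstep1 mulr_gt0 // IH // -ltnS (leq_trans num_y).
Qed.

Lemma moran_fixation_cvg {phi : state N -> R} {Z : R} x :
  (0 < N)%N -> (forall z, \sum_y P z y * phi y = phi z) ->
  phi (all_ones N) = Z -> phi (all_zeros N) = 1 -> Z != 1 ->
  Pn n x (all_ones N) @[n --> \oo] --> (1 - phi x) / (1 - Z).
Proof.
move=> N_gt0 phi_harm phi_ones phi_zeros Z_neq1.
have ones_neq_zeros : all_ones N != all_zeros N.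
  by apply/eqP => /ffunP /(_ (Ordinal N_gt0)); rewrite !ffunE.
apply: (absorption_probability_cvg nstep_ge0 nstep_sum1 nstep_add _ _ ones_neq_zeros N)
  => //.
- by move=> n y; apply: nstep_absorbing => j i; apply: replace_all_ones.
- by move=> n y; apply: nstep_absorbing => j i; apply: replace_all_zeros.
- move=> z /andP[_ z_nz]; apply: reach_all_ones => //.
  by apply: leq_trans (max_card _) _; rewrite card_ord.
- by move=> n z; apply: nstep_harmonic.
Qed.

End MoranProcess.

Definition zeta_weight {R : realType} {N : nat} (zeta : 'I_N -> R) (x : state N) : R :=
  \prod_(i < N) zeta i ^+ (x i : nat).

Definition colour_zeta {R : realType} {N : nat} (green : {set 'I_N}) (zG zR : R)
    (i : 'I_N) : R :=
  if i \in green then zG else zR.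

Lemma zeta_weight_replace {R : realType} {N : nat} (zeta : 'I_N -> R) (x : state N) j i :
  zeta_weight zeta (replace x j i) * zeta i ^+ (x i : nat) =
  zeta_weight zeta x * zeta i ^+ (x j : nat).
Proof.
rewrite /zeta_weight (bigD1 i) //= [in RHS](bigD1 i) //= ffunE eqxx.
rewrite (eq_bigr (fun k => zeta k ^+ (x k : nat))); first by ring.
by move=> k /negbTE k_neq_i; rewrite ffunE k_neq_i.
Qed.

Lemma zeta_weight_all_ones {R : realType} {N : nat} (green : {set 'I_N}) (zG zR : R) :
  zeta_weight (colour_zeta green zG zR) (all_ones N) = zG ^+ #|green| * zR ^+ #|~: green|.
Proof.
rewrite /zeta_weight (bigID (mem green)) /=; congr (_ * _).
  by rewrite -prodr_const; apply: eq_bigr => i; rewrite ffunE /colour_zeta => ->.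
rewrite -prodr_const; apply: eq_big => [i|i /negbTE]; first by rewrite inE.
by rewrite ffunE /colour_zeta => ->.
Qed.

Lemma zeta_weight_all_zeros {R : realType} {N : nat} (zeta : 'I_N -> R) :
  zeta_weight zeta (all_zeros N) = 1.
Proof. by rewrite /zeta_weight big1 // => k _; rewrite ffunE expr0. Qed.

Lemma zeta_weight_single_A {R : realType} {N : nat} (zeta : 'I_N -> R) i :
  zeta_weight zeta (single_A i) = zeta i.
Proof.
rewrite /zeta_weight (bigD1 i) //= ffunE eqxx expr1 big1 ?mulr1 //.
by move=> k /negbTE k_neq_i; rewrite ffunE k_neq_i expr0.
Qed.

Lemma sum_colour_zeta {R : realType} {N : nat} (green : {set 'I_N}) (zG zR : R) :
  \sum_i colour_zeta green zG zR i = #|green|%:R * zG + #|~: green|%:R * zR.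
Proof.
rewrite (bigID (mem green)) /= !mulr_natl; congr (_ + _).
  by rewrite -sumr_const; apply: eq_bigr => i; rewrite /colour_zeta => ->.
rewrite -sumr_const; apply: eq_big => [i|i /negbTE]; first by rewrite inE.
by rewrite /colour_zeta => ->.
Qed.

Section Martingale.
(* On a bipartite graph (green/red) whose reverse edges satisfy w_ji = c w_ij,
   colour weights zG, zR satisfying two balance equations make zeta_weight a
   martingale: the drifts of the two reproduction events across each edge
   cancel. *)
Context {R : realType} {N : nat} {w : 'I_N -> 'I_N -> R} {green : {set 'I_N}}
        {aG aR bG bR c zG zR : R}.
Hypotheses (zG_neq0 : zG != 0) (zR_neq0 : zR != 0).
Hypothesis green_balance : zG * aG * (zR - 1) + bR * c * (1 - zG) = 0.
Hypothesis red_balance : zR * aR * c * (zG - 1) + bG * (1 - zR) = 0.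
Hypothesis bipartite : forall i j, (i \in green) = (j \in green) -> w i j = 0.
Hypothesis reciprocal : forall i j, i \in green -> j \notin green -> w j i = c * w i j.

Local Notation fit := (fitness green aG aR bG bR).
Local Notation phi := (zeta_weight (colour_zeta green zG zR)).

Lemma edge_drift_zero x g r : g \in green -> r \notin green ->
  fit x g * w g r * (phi (replace x g r) - phi x) +
  fit x r * w r g * (phi (replace x r g) - phi x) = 0.
Proof.
move=> g_green r_red.
have phi_gr := zeta_weight_replace (colour_zeta green zG zR) x g r.
have phi_rg := zeta_weight_replace (colour_zeta green zG zR) x r g.
have zeta_g : colour_zeta green zG zR g = zG by rewrite /colour_zeta g_green.
have zeta_r : colour_zeta green zG zR r = zR by rewrite /colour_zeta (negbTE r_red).
rewrite zeta_g zeta_r in phi_gr phi_rg.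
rewrite /fitness g_green (negbTE r_red) (reciprocal _ _ g_green r_red).
case xg: (x g); case xr: (x r); rewrite ?xg ?xr /= ?expr0 ?expr1 ?mulr1 in phi_gr phi_rg *.
- by rewrite !replace_same ?xg ?xr // !subrr !mulr0 addr0.
- rewrite phi_gr (_ : phi (replace x r g) = phi x / zG); last by rewrite -phi_rg mulfK.
  rewrite [X in _ + X = _](_ : _ = phi x * w g r / zG * (bR * c * (1 - zG))); last by field.
  rewrite [X in X + _ = _](_ : _ = phi x * w g r / zG * (zG * aG * (zR - 1))); last by field.
  by rewrite -mulrDr green_balance mulr0.
- rewrite phi_rg (_ : phi (replace x g r) = phi x / zR); last by rewrite -phi_gr mulfK.
  rewrite [X in _ + X = _](_ : _ = phi x * w g r / zR * (zR * aR * c * (zG - 1))); last by field.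
  rewrite [X in X + _ = _](_ : _ = phi x * w g r / zR * (bG * (1 - zR))); last by field.
  by rewrite -mulrDr addrC red_balance mulr0.
- by rewrite !replace_same ?xg ?xr // !subrr !mulr0 addr0.
Qed.

Lemma trans_martingale x :
  0 < total_fitness w green aG aR bG bR x ->
  \sum_y trans w green aG aR bG bR x y * phi y = phi x.
Proof.
move=> total_pos; rewrite trans_expectation.
apply/(canLR (mulfK _)); first by rewrite gt_eqF.
apply/eqP; rewrite -subr_eq0 /total_fitness mulr_sumr -sumrB; apply/eqP.
under eq_bigr do rewrite mulr_sumr -sumrB.
under eq_bigr do under eq_bigr do rewrite [phi x * _]mulrC -mulrBr.
apply: sum_antisymmetric => j i.
case: (boolP (j \in green)) => j_green; case: (boolP (i \in green)) => i_green.
- by rewrite !bipartite ?j_green ?i_green // !(mulr0, mul0r) addr0.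
- exact: edge_drift_zero.
- by rewrite addrC; apply: edge_drift_zero.
- by rewrite !bipartite ?(negbTE j_green) ?(negbTE i_green) // !(mulr0, mul0r) addr0.
Qed.

End Martingale.

Lemma exists_positive_edge {R : realType} {N : nat} {w : 'I_N -> 'I_N -> R} :
  (forall i j, 0 <= w i j) -> (0 < N)%N -> (forall i, 0 < \sum_j w j i) ->
  exists j k, 0 < w j k.
Proof.
move=> w_ge0 N_gt0 indeg_pos; pose i0 := Ordinal N_gt0.
have := indeg_pos i0; rewrite lt0r => /andP[+ _].
by rewrite psumr_neq0 // => /hasP[j _ /= w_pos]; exists j, i0.
Qed.

Lemma exists_red_vertex {R : realType} {N : nat} {w : 'I_N -> 'I_N -> R}
    {green : {set 'I_N}} {j k : 'I_N} :
  (forall i j, (i \in green) = (j \in green) -> w i j = 0) -> 0 < w j k ->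
  exists r, r \notin green.
Proof.
move=> bipartite w_pos.
case: (boolP (j \in green)) => j_green; last by exists j.
case: (boolP (k \in green)) => k_green; last by exists k.
by move: w_pos; rewrite bipartite ?j_green ?k_green // ltxx.
Qed.

Lemma red_degree_balance {R : realType} {N : nat} {w : 'I_N -> 'I_N -> R}
    {green : {set 'I_N}} {c winR woutR : R} {r : 'I_N} :
  (forall i j, (i \in green) = (j \in green) -> w i j = 0) ->
  (forall i j, i \in green -> j \notin green -> w j i = c * w i j) ->
  r \notin green -> \sum_j w j r = winR -> \sum_j w r j = woutR ->
  woutR = c * winR.
Proof.
move=> bipartite reciprocal r_red <- <-; rewrite mulr_sumr; apply: eq_bigr => k _.
case: (boolP (k \in green)) => k_green; first exact: reciprocal.
by rewrite !bipartite ?mulr0 // (negbTE k_green) (negbTE r_red).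
Qed.

Lemma zeta_balance {R : realType} {winG woutG winR woutR aG aR bG bR : R} :
  0 < winG -> 0 < woutG -> 0 < winR -> 0 < woutR ->
  0 < aG -> 0 < aR -> 0 < bG -> 0 < bR ->
  woutR = winG / woutG * winR ->
  let zG := (bR * winG * (aR * woutR + bG * winR)) /
            (aR * woutR * (aG * woutG + bR * winG)) in
  let zR := (bG * winR * (aG * woutG + bR * winG)) /
            (aG * woutG * (aR * woutR + bG * winR)) in
  let c := winG / woutG in
  [/\ 0 < zG, 0 < zR,
      zG * aG * (zR - 1) + bR * c * (1 - zG) = 0 &
      zR * aR * c * (zG - 1) + bG * (1 - zR) = 0].
Proof.
move=> winG_gt0 woutG_gt0 winR_gt0 woutR_gt0 aG_gt0 aR_gt0 bG_gt0 bR_gt0 woutR_eq zG zR c.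
have red_gt0 : 0 < aR * woutR + bG * winR by rewrite addr_gt0 ?mulr_gt0.
have green_gt0 : 0 < aG * woutG + bR * winG by rewrite addr_gt0 ?mulr_gt0.
split; rewrite /zG /zR /c.
- by rewrite divr_gt0 ?mulr_gt0.
- by rewrite divr_gt0 ?mulr_gt0.
- by field; rewrite !gt_eqF.
- move: red_gt0; rewrite woutR_eq => red_gt0.
  by field; rewrite !gt_eqF // addr_gt0 ?mulr_gt0.
Qed.

Lemma mean_fixation_value {R : realType} {N : nat} (green : {set 'I_N}) (zG zR Z : R) :
  (0 < N)%N -> Z != 1 ->
  (1 - N%:R^-1 * (#|green|%:R * zG + #|~: green|%:R * zR)) / (1 - Z) =
  N%:R^-1 * \sum_(i < N) (1 - zeta_weight (colour_zeta green zG zR) (single_A i)) / (1 - Z).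
Proof.
move=> N_gt0 Z_neq1.
have N_neq0 : (N%:R : R) != 0 by rewrite pnatr_eq0 -lt0n.
under eq_bigr do rewrite zeta_weight_single_A.
rewrite -mulr_suml sumrB sumr_const card_ord sum_colour_zeta.
by field; rewrite N_neq0 subr_eq0 eq_sym Z_neq1.
Qed.

Theorem mainTheorem3 (R : realType) (N : nat) (w : 'I_N -> 'I_N -> R)
    (green : {set 'I_N})
    (winG woutG winR woutR aG aR bG bR : R) :
  (0 < N)%N ->
  (forall i j, 0 <= w i j) ->
  (forall i, w i i = 0) ->
  (forall i j, connect [rel k l | 0 < w k l] i j) ->
  (forall i j, (i \in green) = (j \in green) -> w i j = 0) ->
  0 < winG -> 0 < woutG -> 0 < winR -> 0 < woutR ->
  (forall i, i \in green ->
     \sum_(j < N) w j i = winG /\ \sum_(j < N) w i j = woutG) ->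
  (forall i, i \notin green ->
     \sum_(j < N) w j i = winR /\ \sum_(j < N) w i j = woutR) ->
  (forall i j, i \in green -> j \notin green -> w j i = winG / woutG * w i j) ->
  0 < aG -> 0 < aR -> 0 < bG -> 0 < bR ->
  let zG := (bR * winG * (aR * woutR + bG * winR)) /
            (aR * woutR * (aG * woutG + bR * winG)) in
  let zR := (bG * winR * (aG * woutG + bR * winG)) /
            (aG * woutG * (aR * woutR + bG * winR)) in
  let zeta := fun i : 'I_N => if i \in green then zG else zR in
  let phi := fun x : state N => \prod_(i < N) zeta i ^+ (x i : nat) in
  let NG := #|green| in
  let NR := #|~: green| in
  let P := trans w green aG aR bG bR in
  let Pn := nstep w green aG aR bG bR in
  (* martingale property of prod_i zeta_i^{X_n(i)} *)
  (forall x : state N, \sum_(y : state N) P x y * phi y = phi x) /\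
  (zG ^+ NG * zR ^+ NR != 1 ->
     (* fixation probability of A from x *)
     (forall x : state N,
        (fun n : nat => Pn n x (all_ones N)) @ \oo -->
          (1 - phi x) / (1 - zG ^+ NG * zR ^+ NR)) /\
     (* mean fixation probability of a single A at a uniformly random vertex *)
     (fun n : nat => (N%:R)^-1 * \sum_(i < N) Pn n (single_A i) (all_ones N))
        @ \oo -->
          (1 - (N%:R)^-1 * (NG%:R * zG + NR%:R * zR)) /
          (1 - zG ^+ NG * zR ^+ NR)).
Proof.
move=> N_gt0 w_ge0 _ connected bipartite winG_gt0 woutG_gt0 winR_gt0 woutR_gt0
  deg_green deg_red reciprocal aG_gt0 aR_gt0 bG_gt0 bR_gt0 zG zR zeta phi NG NR P Pn.
have [j0 [k0 w_pos]] : exists j k, 0 < w j k.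
  apply: exists_positive_edge => // i; case: (boolP (i \in green)) => i_colour.
    by rewrite (deg_green i i_colour).1.
  by rewrite (deg_red i i_colour).1.
have total_pos x : 0 < total_fitness w green aG aR bG bR x :=
  total_fitness_gt0 aG_gt0 aR_gt0 bG_gt0 bR_gt0 w_ge0 x w_pos.
have [r r_red] := exists_red_vertex bipartite w_pos.
have woutR_eq := red_degree_balance bipartite reciprocal r_red (deg_red r r_red).1
  (deg_red r r_red).2.
have [zG_gt0 zR_gt0 green_bal red_bal] := zeta_balance winG_gt0 woutG_gt0 winR_gt0
  woutR_gt0 aG_gt0 aR_gt0 bG_gt0 bR_gt0 woutR_eq.
have martingale x : \sum_y P x y * phi y = phi x :=
  trans_martingale (lt0r_neq0 zG_gt0) (lt0r_neq0 zR_gt0) green_bal red_bal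
    bipartite reciprocal x (total_pos x).
split=> // Z_neq1.
have fixation x := moran_fixation_cvg aG_gt0 aR_gt0 bG_gt0 bR_gt0 w_ge0 total_pos
  connected x N_gt0 martingale (zeta_weight_all_ones green zG zR)
  (zeta_weight_all_zeros _) Z_neq1.
split=> //; rewrite mean_fixation_value //.
apply: cvgMl_tmp; apply: cvg_big => [|i _]; [exact: add_continuous | exact: fixation].
Qed.
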